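(* Let $G\in\mathcal{G}(\widehat{C}_6,\widehat{C}_7)$, let $x\in V(G)$, let $A$ be a connected component of $G[N_2(x)]$ not belonging to $A^*$, and let $a\in V(A)$. Suppose $N(a)\cap D=\{v_1,v_2\}$ with $v_1\ne v_2$. Then one of the following holds: (i) $N(\{v_1,v_2\})\cap N_2(x)=\{a\}$; (ii) there is exactly one connected component $A'\neq A$ of $G[N_2(x)]$ such that $N(V(A'))\cap N(x)=\{v_1,v_2\}$, and every connected component $A''$ of $G[N_2(x)]$ with $A''\ne A$ and $A''\neq A'$ satisfies $\{v_1,v_2\}\cap N(V(A''))=\emptyset$.
   Context: All graphs are finite, simple and undirected. $\mathcal{G}(\widehat{C}_6,\widehat{C}_7)$ is the family of graphs with no subgraph (not necessarily induced) isomorphic to $C_6$ or $C_7$. For a vertex set $S$, $N_i(S)$ is the set of vertices at distance exactly $i$ from $S$, $N(S)=N_1(S)$, $N(v)=N(\{v\})$, $N_2(v)=N_2(\{v\})$ (all in $G$). $A^*$ is the set of connected components $A$ of $G[N_2(x)]$ for which there exists a vertex $a\in V(A)$ with $N(x)\cap N(a)=N(x)\cap N(V(A))$; $V(A^* )$ is the union of their vertex sets; and $D=N(x)\setminus N(V(A^* ))$. *)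

From mathcomp Require Import all_boot.
Set Implicit Arguments. Unset Strict Implicit. Unset Printing Implicit Defensive.

Section Graphs.
Variables (T : finType) (e : rel T).

Definition simple_graph : Prop := symmetric e /\ irreflexive e.

Definition has_Ck (k : nat) : Prop :=
  exists f : nat -> T, {in gtn k &, injective f} /\
    forall i, i < k -> e (f i) (f ((i.+1) %% k)).

Definition no_C6_C7 : Prop := ~ has_Ck 6 /\ ~ has_Ck 7.

Definition Nv (v : T) : {set T} := [set y | e v y].
Definition NS (S : {set T}) : {set T} :=
  [set y | (y \notin S) && [exists s in S, e s y]].
Definition N2 (x : T) : {set T} :=
  [set y | [&& y != x, ~~ e x y & [exists z, e x z && e z y]]].

Definition induced (W : {set T}) : rel T :=
  fun u v => [&& e u v, u \in W & v \in W].

Definition is_comp (W C : {set T}) : bool :=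
  [exists c in W, C == [set y | connect (induced W) c y]].

Definition in_Astar (x : T) (A : {set T}) : bool :=
  is_comp (N2 x) A &&
  [exists a in A, Nv x :&: Nv a == Nv x :&: NS A].

Definition VAstar (x : T) : {set T} :=
  [set y | [exists C : {set T}, in_Astar x C && (y \in C)]].

Definition Dset (x : T) : {set T} := Nv x :\: NS (VAstar x).

End Graphs.

From mathcomp Require Import all_boot.
Set Implicit Arguments. Unset Strict Implicit. Unset Printing Implicit Defensive.

(* All the cycles below pass through x, the common neighbours v1, v2 of x and a,
   and a short path in N_2(x).  They force A to be a star centred at a whose
   other vertices miss v1 and v2, and they force every component C <> A touching
   {v1, v2} to have all its N(x)-neighbours in {v1, v2}.  As v1, v2 lie outside
   N(V(A^* )), such a C is not in A^*, so it sees both v1 and v2, and in fact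
   through an edge b1 b2 with b1 ~ v1 and b2 ~ v2.  Two such components would
   close the 6-cycle b1 b2 v2 d2 d1 v1. *)

Lemma ucycle_has_Ck (T : finType) (e : rel T) (x0 : T) (s : seq T) :
  ucycle e (x0 :: s) -> has_Ck e (size s).+1.
Proof.
case/andP=> cyc uniq_s; exists (nth x0 (x0 :: s)); split.
  by move=> i j lti ltj /eqP; rewrite nth_uniq // => /eqP.
move=> i lti; have xi : nth x0 (x0 :: s) i \in x0 :: s by rewrite mem_nth.
have := next_cycle cyc xi; rewrite next_nth xi index_uniq //=.
have [ltis | ] := ltnP i.+1 (size s).+1; first by rewrite modn_small.
rewrite ltnS => le_si; have -> : i = size s by apply/anti_leq; rewrite le_si andbT -ltnS.
by rewrite modnn (nth_default x0 (leqnn (size s))).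
Qed.

Lemma connect_ind_from (T : finType) (r : rel T) (P : T -> Prop) c :
  P c -> (forall y z, connect r c y -> r y z -> P y -> P z) ->
  forall y, connect r c y -> P y.
Proof.
move=> Pc step y /connectP [p]; elim/last_ind: p y => [|p z IH] y /=.
  by move=> _ ->.
rewrite rcons_path last_rcons => /andP [cp rz] ->.
by apply: (step (last c p)) => //; [apply/connectP; exists p | apply: IH].
Qed.

Lemma connect_cross (T : finType) (r : rel T) (P : pred T) c d :
  connect r c d -> P c -> ~~ P d ->
  exists y z, [/\ connect r c y, r y z, P y & ~~ P z].
Proof.
move=> cd Pc nPd.
pose Q y := P y \/ exists y z, [/\ connect r c y, r y z, P y & ~~ P z].
have : Q d.
  apply: (connect_ind_from (P := Q)) cd; first by left.
  move=> y z cy ryz [Py | //]; last by right.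
  by case Pz: (P z); [left | right; exists y, z; rewrite Pz].
by case=> // Pd; rewrite Pd in nPd.
Qed.

Section SecondNeighbourhood.
Variables (T : finType) (e : rel T) (x : T).
Hypotheses (esym : symmetric e) (eirr : irreflexive e).
Local Notation W := (N2 e x).

Lemma N2_has_parent y : y \in W -> exists2 t, e x t & e t y.
Proof. by rewrite inE => /and3P [_ _ /existsP [t /andP []]]; exists t. Qed.

Lemma N2_nonadj y : y \in W -> ~~ e x y.
Proof. by rewrite inE => /and3P []. Qed.

Lemma N2_neq y : y \in W -> y != x.
Proof. by rewrite inE => /and3P []. Qed.

Lemma N2_neq_N y t : y \in W -> e x t -> y != t.
Proof. by move=> /N2_nonadj yx xt; apply: contraNneq yx => ->. Qed.

Lemma edge_neq u v : e u v -> u != v.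
Proof. by move=> uv; apply: contraTneq uv => ->; rewrite eirr. Qed.

Lemma induced_sym (S : {set T}) : symmetric (induced e S).
Proof. by move=> u v; rewrite /induced esym; congr (_ && _); apply: andbC. Qed.

Definition comp_of y := [set z | connect (induced e W) y z].

Lemma comp_ofE C y : is_comp e W C -> y \in C -> C = comp_of y.
Proof.
case/existsP=> c /andP [_ /eqP ->]; rewrite inE => cy.
have csym := sym_connect_sym (@induced_sym W).
apply/setP=> z; rewrite !inE; apply/idP/idP => [cz | yz]; last exact: connect_trans yz.
by apply: connect_trans cz; rewrite csym.
Qed.

Lemma comp_of_comp y : y \in W -> is_comp e W (comp_of y).
Proof. by move=> yW; apply/existsP; exists y; rewrite yW eqxx. Qed.

Lemma comp_of_self y : y \in comp_of y.
Proof. by rewrite inE connect0. Qed.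

Lemma comp_ind C c (P : T -> Prop) : is_comp e W C -> c \in C -> P c ->
  (forall y z, y \in C -> z \in C -> e y z -> P y -> P z) -> {in C, forall z, P z}.
Proof.
move=> compC cC Pc step z; rewrite (comp_ofE compC cC) inE in step *.
apply: connect_ind_from => // y u cy yu; case/and3P: (yu) => eyu _ _.
by apply: step eyu; rewrite inE // (connect_trans cy) ?connect1.
Qed.

Lemma comp_sub C : is_comp e W C -> C \subset W.
Proof.
case/existsP=> c /andP [cW /eqP ->]; apply/subsetP => z; rewrite inE.
by move: z; apply: (connect_ind_from (P := fun z => z \in W)) => // y u _ /and3P [].
Qed.

Lemma comp_eq C1 C2 y : is_comp e W C1 -> is_comp e W C2 ->
  y \in C1 -> y \in C2 -> C1 = C2.
Proof. by move=> comp1 comp2 y1 y2; rewrite (comp_ofE comp1 y1) (comp_ofE comp2 y2). Qed.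

Lemma comp_notin C1 C2 y : is_comp e W C1 -> is_comp e W C2 -> C1 != C2 ->
  y \in C2 -> y \notin C1.
Proof. by move=> comp1 comp2 + y2; apply: contra_neqN => y1; apply: comp_eq y1 y2. Qed.

Lemma NS_witness C v : v \in NS e C -> exists2 c, c \in C & e c v.
Proof. by rewrite inE => /andP [_ /existsP [c /andP [cC cv]]]; exists c. Qed.

Lemma comp_NS C c v : is_comp e W C -> c \in C -> e x v -> e c v -> v \in NS e C.
Proof.
move=> compC cC xv cv; rewrite inE; apply/andP; split.
  by apply: contraTN xv => /(subsetP (comp_sub compC)) /N2_nonadj.
by apply/existsP; exists c; rewrite cC.
Qed.

Lemma Nx_notin_VAstar t : e x t -> t \notin VAstar e x.
Proof.
move=> xt; rewrite inE; apply/existsP => [[C /andP [/andP [compC _] tC]]].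
by have := N2_nonadj (subsetP (comp_sub compC) t tC); rewrite xt.
Qed.

Lemma Astar_NS_VAstar C c v : in_Astar e x C -> c \in C -> e x v -> e c v ->
  v \in NS e (VAstar e x).
Proof.
move=> AC cC xv cv; rewrite inE Nx_notin_VAstar //; apply/existsP; exists c.
by rewrite cv andbT inE; apply/existsP; exists C; rewrite AC.
Qed.

Lemma notin_Astar_witness C c : is_comp e W C -> ~~ in_Astar e x C -> c \in C ->
  exists t, [/\ t \in NS e C, e x t & ~~ e c t].
Proof.
move=> compC nAC cC.
have sub : Nv e x :&: Nv e c \subset Nv e x :&: NS e C.
  apply/subsetP => t /setIP [xt ct]; rewrite in_setI xt /=.
  by rewrite !inE in xt ct; apply: comp_NS cC xt ct.
have : ~~ (Nv e x :&: Nv e c == Nv e x :&: NS e C).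
  by apply: contra nAC => eqN; rewrite /in_Astar compC; apply/existsP; exists c; rewrite cC.
rewrite eqEsubset sub /= => /subsetPn [t /setIP [xt tC]].
by rewrite inE in xt; rewrite !inE xt => ct; exists t.
Qed.

Hypotheses (noC6 : ~ has_Ck e 6) (noC7 : ~ has_Ck e 7).

Ltac distinct := match goal with |- is_true (?u != ?v) => first
  [ assumption | rewrite eq_sym; assumption
  | by apply: N2_neq_N | by rewrite eq_sym; apply: N2_neq_N
  | by apply: N2_neq | by rewrite eq_sym; apply: N2_neq
  | by apply: edge_neq | by rewrite eq_sym; apply: edge_neq ] end.

Ltac no_cycle noCk u0 s :=
  exfalso; apply: noCk; apply: (@ucycle_has_Ck _ e u0 s);
  rewrite /ucycle /= !inE !negb_or ?andbT; repeat (apply/andP; split);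
  solve [ done | rewrite esym; done | distinct ].

Section NeighboursInD.
Variables (A : {set T}) (a v1 v2 : T).
Hypotheses (compA : is_comp e W A) (aA : a \in A) (v12 : v1 != v2).
Hypotheses (av1 : e a v1) (av2 : e a v2) (xv1 : e x v1) (xv2 : e x v2).
Local Notation V := [set v1; v2].

Let aW : a \in W. Proof. exact: subsetP (comp_sub compA) a aA. Qed.

Lemma comp_star : {in A, forall z, z = a \/ e a z}.
Proof.
apply: (comp_ind compA aA); first by left.
move=> y z yA zA yz [ya | ay]; first by right; rewrite -ya.
have [-> | za] := eqVneq z a; first by left.
(* a 2-path a y z in N_2(x) closes a 6-cycle through v1 or v2 and x *)
have [yW zW] := (subsetP (comp_sub compA) y yA, subsetP (comp_sub compA) z zA).
case: (N2_has_parent zW) => t xt tz.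
case: (eqVneq t v1) tz xt => [-> | tv1] tz xt; first by no_cycle noC6 v2 [:: a; y; z; v1; x].
by no_cycle noC6 v1 [:: a; y; z; t; x].
Qed.

Lemma Nx_neighbour_in_V z t : z \in W -> z != a -> e z v1 || e z v2 ->
  e x t -> e z t -> t \in V.
Proof.
move=> zW za zV xt zt; apply: contraT; rewrite !inE negb_or => /andP [tv1 tv2].
case/orP: zV => zv; first by no_cycle noC6 a [:: v2; x; t; z; v1].
by no_cycle noC6 a [:: v1; x; t; z; v2].
Qed.

Lemma Nx_neighbour_in_V2 z y t : z \in W -> y \in W -> z != a -> y != a ->
  e z y -> e y v1 || e y v2 -> e x t -> e z t -> t \in V.
Proof.
move=> zW yW za ya zy yV xt zt; apply: contraT; rewrite !inE negb_or => /andP [tv1 tv2].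
case/orP: yV => yv; first by no_cycle noC7 t [:: z; y; v1; a; v2; x].
by no_cycle noC7 t [:: z; y; v2; a; v1; x].
Qed.

Lemma comp_Nx_neighbour_in_V C c : is_comp e W C -> a \notin C -> c \in C -> e c v1 || e c v2 ->
  {in C, forall z t, e x t -> e z t -> t \in V}.
Proof.
move=> compC aC cC cV; have CW := subsetP (comp_sub compC).
have neq_a z : z \in C -> z != a by move=> zC; apply: contraNneq aC => <-.
apply: (comp_ind compC cC) => [t | y z yC zC yz tied_y t xt zt].
  by apply: Nx_neighbour_in_V; rewrite ?CW ?neq_a.
have [s xs sy] := N2_has_parent (CW y yC); rewrite esym in sy.
have yV : e y v1 || e y v2 by case/set2P: (tied_y s xs sy) => <-; rewrite sy ?orbT.
apply: (Nx_neighbour_in_V2 (z := z) (y := y)) => //; try by [apply: CW | apply: neq_a].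
by rewrite esym.
Qed.

Hypothesis A_notin_Astar : ~~ in_Astar e x A.

Lemma exists_outer_edge : exists u b, [/\ e x u, ~~ e a u, b \in A, e b u & e a b].
Proof.
have [u [uA xu au]] := notin_Astar_witness compA A_notin_Astar aA.
have [b bA bu] := NS_witness uA.
case: (comp_star bA) => [ba | ab]; first by move: bu; rewrite ba (negbTE au).
by exists u, b.
Qed.

Lemma comp_V_neighbour : {in A, forall w, e w v1 || e w v2 -> w = a}.
Proof.
move=> w wA wV; apply/eqP/contraT => wa.
have [u [b [xu au bA bu ab]]] := exists_outer_edge.
have aw : e a w by case: (comp_star wA) => // wa'; rewrite wa' eqxx in wa.
have [wW bW] := (subsetP (comp_sub compA) w wA, subsetP (comp_sub compA) b bA).
have [uv1 uv2] : u != v1 /\ u != v2 by split; apply: contraNneq au => ->.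
have [wb | wb] := eqVneq w b; [subst w | ]; case/orP: wV => wv.
- by no_cycle noC6 a [:: v2; x; u; b; v1].
- by no_cycle noC6 a [:: v1; x; u; b; v2].
- by no_cycle noC6 w [:: v1; x; u; b; a].
- by no_cycle noC6 w [:: v2; x; u; b; a].
Qed.

Hypotheses (v1D : v1 \notin NS e (VAstar e x)) (v2D : v2 \notin NS e (VAstar e x)).

Lemma V_comp_notin_Astar (C : {set T}) c :
  c \in C -> e c v1 || e c v2 -> ~~ in_Astar e x C.
Proof.
move=> cC cV; apply/negP => AC.
by case/orP: cV => cv; [move/negP: v1D | move/negP: v2D];
  apply; apply: Astar_NS_VAstar AC cC _ cv.
Qed.

Lemma V_comp_NS C c : is_comp e W C -> a \notin C -> c \in C -> e c v1 || e c v2 ->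
  NS e C :&: Nv e x = V.
Proof.
move=> compC aC cC cV; have tied := comp_Nx_neighbour_in_V compC aC cC cV.
have [t [tC xt ct]] := notin_Astar_witness compC (V_comp_notin_Astar cC cV) cC.
have tV : t \in V by have [s sC st] := NS_witness tC; apply: tied sC _ xt st.
apply/eqP; rewrite eqEsubset; apply/andP; split; apply/subsetP => v.
  by case/setIP => /NS_witness [s sC sv]; rewrite inE => xv; apply: tied sC _ xv sv.
move=> vV; have xv : e x v by case/set2P: vV => ->.
rewrite in_setI [v \in Nv e x]inE xv andbT.
have [cv | ncv] := boolP (e c v); first exact: comp_NS cC xv cv.
suff -> : v = t by [].
by case/set2P: vV tV cV ncv ct => -> /set2P [] ->; rewrite // => /orP [] ->.
Qed.

Lemma V_comp_witness C v :
  NS e C :&: Nv e x = V -> v \in V -> exists2 c, c \in C & e c v.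
Proof. by move=> NSC; rewrite -NSC => /setIP [/NS_witness]. Qed.

Lemma V_comp_edge C : is_comp e W C -> a \notin C -> NS e C :&: Nv e x = V ->
  exists b1 b2, [/\ b1 \in C, b2 \in C, e b1 b2, e b1 v1 & e b2 v2].
Proof.
move=> compC aC NSC.
have [b1 b1C b1v1] := V_comp_witness NSC (set21 v1 v2).
have [b2 b2C b2v2] := V_comp_witness NSC (set22 v1 v2).
have b1V : e b1 v1 || e b1 v2 by rewrite b1v1.
have tied := comp_Nx_neighbour_in_V compC aC b1C b1V.
have b2v1 : ~~ e b2 v1.
  (* otherwise N(x) :&: N(b2) = N(x) :&: N(C), putting C in A^* *)
  apply/negP => b2v1; have b2V : e b2 v1 || e b2 v2 by rewrite b2v1.
  move/negP: (V_comp_notin_Astar b2C b2V); apply; rewrite /in_Astar compC.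
  apply/existsP; exists b2; rewrite b2C [Nv e x :&: NS e C]setIC NSC /=.
  apply/eqP/setP => t.
  rewrite in_setI [t \in Nv e x]inE [t \in Nv e b2]inE.
  apply/andP/idP => [[xt b2t] | /set2P [] ->]; [exact: tied b2C _ xt b2t | by [] | by []].
have Cb1 := comp_ofE compC b1C.
have b1b2 : connect (induced e W) b1 b2 by move: b2C; rewrite Cb1 inE.
have [y [z [b1y yz yv1 zv1]]] := connect_cross (P := e^~ v1) b1b2 b1v1 b2v1.
have [yC zC] : y \in C /\ z \in C.
  by rewrite Cb1 !inE b1y (connect_trans b1y (connect1 yz)).
case/and3P: yz => eyz _ zW; have [t xt tz] := N2_has_parent zW; rewrite esym in tz.
case/set2P: (tied z zC t xt tz) => tE; first by rewrite -tE tz in zv1.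
by exists y, z; rewrite -tE.
Qed.

Lemma V_comp_unique B B' : is_comp e W B -> is_comp e W B' ->
  a \notin B -> a \notin B' -> NS e B :&: Nv e x = V -> NS e B' :&: Nv e x = V -> B = B'.
Proof.
move=> compB compB' aB aB' NSB NSB'; apply/eqP/contraT => BB'.
have [b1 [b2 [b1B b2B b12 b1v1 b2v2]]] := V_comp_edge compB aB NSB.
have [d1 [d2 [d1B d2B d12 d1v1 d2v2]]] := V_comp_edge compB' aB' NSB'.
have sep b d : b \in B -> d \in B' -> b != d.
  move=> bB dB; have bB' : b \notin B'.
    by apply: (comp_notin compB' compB) bB; rewrite eq_sym.
  by apply: contraNneq bB' => ->.
have b1d1 := sep _ _ b1B d1B; have b1d2 := sep _ _ b1B d2B.
have b2d1 := sep _ _ b2B d1B; have b2d2 := sep _ _ b2B d2B.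
have [b1W b2W] := (subsetP (comp_sub compB) b1 b1B, subsetP (comp_sub compB) b2 b2B).
have [d1W d2W] := (subsetP (comp_sub compB') d1 d1B, subsetP (comp_sub compB') d2 d2B).
by no_cycle noC6 b1 [:: b2; v2; d2; d1; v1].
Qed.

Lemma hub_dichotomy :
  (NS e V :&: W = [set a]) \/
  (exists A' : {set T},
     [/\ is_comp e W A', A' != A, NS e A' :&: Nv e x = V,
         (forall B : {set T}, is_comp e W B -> B != A -> NS e B :&: Nv e x = V -> B = A') &
         (forall A'' : {set T}, is_comp e W A'' -> A'' != A -> A'' != A' ->
             V :&: NS e A'' = set0)]).
Proof.
have notin_a C : is_comp e W C -> C != A -> a \notin C.
  by move=> compC CA; apply: comp_notin compC compA CA aA.
have [/exists_inP [w wW /andP [wa wV]] | none] :=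
  boolP [exists w in W, (w != a) && (e w v1 || e w v2)].
  have wA : w \notin A by apply: contra wa => wA; rewrite (comp_V_neighbour wA wV).
  have compA' := comp_of_comp wW.
  have A'A : comp_of w != A by apply: contraNneq wA => <-; apply: comp_of_self.
  have NSA' := V_comp_NS compA' (notin_a _ compA' A'A) (comp_of_self w) wV.
  have unique B : is_comp e W B -> B != A -> NS e B :&: Nv e x = V -> B = comp_of w.
    by move=> compB BA NSB; apply: V_comp_unique NSB NSA'; rewrite ?notin_a.
  right; exists (comp_of w); split=> // C compC CA CA'.
  apply/setP => v; rewrite in_set0; apply/setIP => -[vV /NS_witness [c cC cv]].
  have cV : e c v1 || e c v2 by case/set2P: vV cv => -> ->; rewrite ?orbT.
  by move/eqP: CA'; apply; apply: unique (V_comp_NS compC (notin_a _ compC CA) cC cV).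
left; apply/setP => z; rewrite in_setI in_set1.
apply/andP/eqP => [[/NS_witness [v vV vz] zW] | ->].
  apply/eqP/contraT => za; case/negP: none; apply/exists_inP; exists z => //.
  by rewrite za; case/set2P: vV vz => ->; rewrite esym => ->; rewrite ?orbT.
split=> //; rewrite inE !inE negb_or (N2_neq_N aW xv1) (N2_neq_N aW xv2) /=.
by apply/existsP; exists v1; rewrite !inE eqxx esym.
Qed.

End NeighboursInD.

End SecondNeighbourhood.

Theorem lemma2p11 (T : finType) (e : rel T) (Hsimple : simple_graph e)
  (HG : no_C6_C7 e) (x : T) (A : {set T})
  (HA : is_comp e (N2 e x) A) (HnA : ~~ in_Astar e x A)
  (a : T) (Ha : a \in A) (v1 v2 : T) (Hv : v1 != v2)
  (HaD : Nv e a :&: Dset e x = [set v1; v2]) :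
  (NS e [set v1; v2] :&: N2 e x = [set a]) \/
  (exists A' : {set T},
     [/\ is_comp e (N2 e x) A', A' != A,
         NS e A' :&: Nv e x = [set v1; v2],
         (forall B : {set T}, is_comp e (N2 e x) B -> B != A ->
             NS e B :&: Nv e x = [set v1; v2] -> B = A') &
         (forall A'' : {set T}, is_comp e (N2 e x) A'' -> A'' != A -> A'' != A' ->
             [set v1; v2] :&: NS e A'' = set0)]).
Proof.
case: Hsimple => esym eirr; case: HG => noC6 noC7.
have inD v : v \in [set v1; v2] -> [/\ e a v, e x v & v \notin NS e (VAstar e x)].
  by rewrite -HaD => /setIP [+ /setDP []]; rewrite !inE.
have [av1 xv1 v1D] := inD v1 (set21 v1 v2).
have [av2 xv2 v2D] := inD v2 (set22 v1 v2).
exact: hub_dichotomy.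
Qed.
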